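(* Let $\mathcal D$ be universal, $\mathrm M=(M,d)\in\mathfrak U_{\mathcal D}$, and $r\in\mathcal D$, $r>0$, with $(r,2r]\cap\mathcal D=\emptyset$. Let $A_0,\dots,A_{n-1}$ be pairwise distinct $\sim_r$-equivalence classes. Then there exist points $a_i\in A_i$ ($i<n$) with $d(a_i,a_j)=d_{\min}(A_i,A_j)$ for all $i,j<n$.
   Context: $\mathcal D$ is a finite subset of $\mathbb R_{\ge0}$ containing $0$. $\mathfrak U_{\mathcal D}$ is the class of countable homogeneous metric spaces (every isometry between finite subspaces extends to an isometry of the space onto itself) with distance set exactly $\mathcal D$ into which every finite metric space with distances in $\mathcal D$ embeds isometrically; $\mathcal D$ is universal if this class is nonempty. $x\sim_r y$ iff $d(x,y)\le r$. For $A,B\subseteq M$, $d_{\min}(A,B)=\min\{d(a,b):a\in A,b\in B\}$. *)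

From Stdlib Require Import Reals List.
Open Scope R_scope.

Definition dist_set_ok (D : list R) : Prop :=
  In 0 D /\ (forall t, In t D -> 0 <= t).

Definition is_metric {M : Type} (d : M -> M -> R) : Prop :=
  (forall x y, 0 <= d x y) /\
  (forall x y, d x y = 0 <-> x = y) /\
  (forall x y, d x y = d y x) /\
  (forall x y z, d x z <= d x y + d y z).

Definition countable_type (M : Type) : Prop :=
  exists g : M -> nat, forall x y, g x = g y -> x = y.

Definition dist_set_exactly {M : Type} (d : M -> M -> R) (D : list R) : Prop :=
  (forall x y, In (d x y) D) /\ (forall t, In t D -> exists x y, d x y = t).

(* Homogeneity: every isometry between finite subspaces (given as the list of
   its graph pairs (x, image of x)) extends to an isometry of M onto itself. *)
Definition homogeneous {M : Type} (d : M -> M -> R) : Prop :=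
  forall l : list (M * M),
    (forall p q, In p l -> In q l -> d (fst p) (fst q) = d (snd p) (snd q)) ->
    exists h : M -> M,
      (forall y, exists x, h x = y) /\
      (forall x y, d (h x) (h y) = d x y) /\
      (forall p, In p l -> h (fst p) = snd p).

Definition finite_metric_in (D : list R) (n : nat) (e : nat -> nat -> R) : Prop :=
  (forall i j, (i < n)%nat -> (j < n)%nat -> 0 <= e i j) /\
  (forall i j, (i < n)%nat -> (j < n)%nat -> (e i j = 0 <-> i = j)) /\
  (forall i j, (i < n)%nat -> (j < n)%nat -> e i j = e j i) /\
  (forall i j k, (i < n)%nat -> (j < n)%nat -> (k < n)%nat -> e i k <= e i j + e j k) /\
  (forall i j, (i < n)%nat -> (j < n)%nat -> In (e i j) D).

Definition universal_for {M : Type} (d : M -> M -> R) (D : list R) : Prop :=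
  forall n e, finite_metric_in D n e ->
    exists f : nat -> M, forall i j, (i < n)%nat -> (j < n)%nat -> d (f i) (f j) = e i j.

Definition in_UD (D : list R) (M : Type) (d : M -> M -> R) : Prop :=
  is_metric d /\ countable_type M /\ homogeneous d /\
  dist_set_exactly d D /\ universal_for d D.

Definition universal_D (D : list R) : Prop :=
  exists (M : Type) (d : M -> M -> R), in_UD D M d.

Definition sim_class {M : Type} (d : M -> M -> R) (r : R) (A : M -> Prop) : Prop :=
  exists x, forall y, A y <-> d x y <= r.

Definition is_dmin {M : Type} (d : M -> M -> R) (A B : M -> Prop) (m : R) : Prop :=
  (exists a b, A a /\ B b /\ d a b = m) /\
  (forall a b, A a -> B b -> m <= d a b).

(* Because no distance of D lies in (r, 2r], the relation [d x y <= r] is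
   transitive: the ~r-classes have diameter at most r and distinct classes are
   more than r apart.  Homogeneity and universality give the one-point
   extension property: any consistent prescription of positive distances in D
   to finitely many points is realised by a point of M.  Applied to a point a
   of A and a pair (a0, b0) realising d_min(A,B), with distances d_min(A,B)
   and r, it shows that d_min(A,B) is attained from every point of A, whence
   d_min is a pseudometric on the classes.  The a_i are then chosen one at a
   time: a point at distance r from some point of A_k and at distance
   d_min(A_l,A_k) from every earlier a_l exists and lies in A_k. *)
From Stdlib Require Import Reals List Lra Lia Classical ClassicalEpsilon.
Open Scope R_scope.

Lemma exists_min_in_list (P : R -> Prop) (L : list R) :
  (exists t, In t L /\ P t) ->
  exists m, In m L /\ P m /\ forall t, In t L -> P t -> m <= t.
Proof.
  induction L as [|a L IH]; intros [t [Ht HPt]]; [destruct Ht|].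
  destruct (classic (exists t, In t L /\ P t)) as [HL|HL].
  - destruct (IH HL) as [m [Hm [HPm Hmin]]].
    destruct (classic (P a /\ a <= m)) as [[HPa Ham]|Ha].
    + exists a; repeat split; [now left|easy|].
      intros s [<-|Hs] HPs; [lra|]; specialize (Hmin s Hs HPs); lra.
    + exists m; repeat split; [now right|easy|].
      intros s [<-|Hs] HPs; [|now apply Hmin].
      apply Rnot_lt_le; intro; apply Ha; split; [easy|lra].
  - destruct Ht as [<-|Ht]; [|exfalso; eauto].
    exists a; repeat split; [now left|easy|].
    intros s [<-|Hs] HPs; [lra|exfalso; eauto].
Qed.

Section UniversalHomogeneous.

Variables (M : Type) (d : M -> M -> R) (D : list R).
Hypothesis Hd : is_metric d.
Hypothesis HinD : forall x y, In (d x y) D.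
Hypothesis H0D : In 0 D.
Hypothesis Hhom : homogeneous d.
Hypothesis Hun : universal_for d D.

Lemma d_ge0 x y : 0 <= d x y.
Proof. apply Hd. Qed.

Lemma d_eq0 x y : d x y = 0 <-> x = y.
Proof. apply Hd. Qed.

Lemma d_sym x y : d x y = d y x.
Proof. apply Hd. Qed.

Lemma d_triangle x y z : d x z <= d x y + d y z.
Proof. apply Hd. Qed.

Lemma d_refl x : d x x = 0.
Proof. now apply d_eq0. Qed.

Lemma universal_inhabited : inhabited M.
Proof.
  destruct (Hun 1%nat (fun _ _ => 0)) as [f _]; [|exact (inhabits (f 0%nat))].
  repeat split; intros; try lra; try lia; easy.
Qed.

Definition one_point_metric (K : nat) (x : nat -> M) (t : nat -> R) (i j : nat) : R :=
  if Nat.eqb i K then (if Nat.eqb j K then 0 else t j)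
  else if Nat.eqb j K then t i else d (x i) (x j).

Section OnePointExtension.

Variables (K : nat) (x : nat -> M) (t : nat -> R).
Hypothesis Hinj : forall i j, (i < K)%nat -> (j < K)%nat -> x i = x j -> i = j.
Hypothesis Ht : forall i, (i < K)%nat -> In (t i) D /\ 0 < t i.
Hypothesis Hpair : forall i j, (i < K)%nat -> (j < K)%nat ->
  t i <= d (x i) (x j) + t j /\ d (x i) (x j) <= t i + t j.

Lemma one_point_metric_finite : finite_metric_in D (S K) (one_point_metric K x t).
Proof.
  assert (Htpos : forall i, (i < K)%nat -> 0 < t i) by (intros i Hi; apply Ht, Hi).
  unfold finite_metric_in, one_point_metric; split; [|split; [|split; [|split]]].
  - intros i j Hi Hj; destruct (Nat.eqb_spec i K), (Nat.eqb_spec j K);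
      try lra; try (apply Rlt_le, Htpos; lia); apply d_ge0.
  - intros i j Hi Hj; split.
    + intros E; destruct (Nat.eqb_spec i K), (Nat.eqb_spec j K); try lia.
      * specialize (Htpos j ltac:(lia)); lra.
      * specialize (Htpos i ltac:(lia)); lra.
      * apply Hinj; [lia|lia|now apply d_eq0].
    + intros ->; destruct (Nat.eqb_spec j K); [easy|apply d_refl].
  - intros i j Hi Hj; destruct (Nat.eqb_spec i K), (Nat.eqb_spec j K);
      [easy|easy|easy|apply d_sym].
  - intros i j k Hi Hj Hk.
    destruct (Nat.eqb_spec i K), (Nat.eqb_spec j K), (Nat.eqb_spec k K);
      try (subst; lra).
    + specialize (Htpos j ltac:(lia)); lra.
    + destruct (Hpair k j ltac:(lia) ltac:(lia)); rewrite d_sym; lra.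
    + destruct (Hpair i k ltac:(lia) ltac:(lia)); lra.
    + destruct (Hpair i j ltac:(lia) ltac:(lia)); lra.
    + apply d_triangle.
  - intros i j Hi Hj; destruct (Nat.eqb_spec i K), (Nat.eqb_spec j K);
      try easy; apply Ht; lia.
Qed.

(* Embed the extended finite metric, then move the image of {0, ..., K-1}
   back onto the x i by an isometry of M. *)
Lemma one_point_extension : exists p, forall i, (i < K)%nat -> d p (x i) = t i.
Proof.
  destruct (Hun _ _ one_point_metric_finite) as [f Hf].
  assert (Hfx : forall i j, (i < K)%nat -> (j < K)%nat ->
                  d (f i) (f j) = d (x i) (x j)).
  { intros i j Hi Hj; rewrite Hf by lia; unfold one_point_metric.
    destruct (Nat.eqb_spec i K), (Nat.eqb_spec j K); easy || lia. }
  destruct (Hhom (map (fun i => (f i, x i)) (seq 0 K))) as [h [_ [Hiso Hmap]]].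
  { intros p q Hp Hq.
    apply in_map_iff in Hp as [i [<- Hi]]; apply in_map_iff in Hq as [j [<- Hj]].
    apply in_seq in Hi; apply in_seq in Hj; apply Hfx; lia. }
  exists (h (f K)); intros i Hi.
  assert (Hhi : h (f i) = x i).
  { apply (Hmap (f i, x i)), in_map_iff; exists i; split; [easy|apply in_seq; lia]. }
  rewrite <- Hhi, Hiso, Hf by lia; unfold one_point_metric.
  rewrite Nat.eqb_refl; destruct (Nat.eqb_spec i K); easy || lia.
Qed.

End OnePointExtension.

Definition dmin (A B : M -> Prop) : R := epsilon (inhabits 0) (is_dmin d A B).

Lemma is_dmin_unique A B m m' : is_dmin d A B m -> is_dmin d A B m' -> m = m'.
Proof.
  intros [[a [b [Ha [Hb <-]]]] Hl] [[a' [b' [Ha' [Hb' <-]]]] Hl'].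
  specialize (Hl a' b' Ha' Hb'); specialize (Hl' a b Ha Hb); lra.
Qed.

Lemma is_dmin_sym A B m : is_dmin d A B m -> is_dmin d B A m.
Proof.
  intros [[a [b [Ha [Hb Hab]]]] Hl]; split.
  - exists b, a; rewrite d_sym; auto.
  - intros y x Hy Hx; rewrite d_sym; auto.
Qed.

Lemma dmin_spec A B a b : A a -> B b -> is_dmin d A B (dmin A B).
Proof.
  intros Ha Hb; unfold dmin; apply epsilon_spec.
  destruct (exists_min_in_list (fun t => exists a b, A a /\ B b /\ d a b = t) D)
    as [m [_ [Hm Hmin]]]; [exists (d a b); split; eauto 6|].
  exists m; split; [easy|]; intros x y Hx Hy; apply Hmin; eauto 6.
Qed.

Lemma dmin_le A B a b : A a -> B b -> dmin A B <= d a b.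
Proof. intros Ha Hb; now apply (dmin_spec A B a b). Qed.

Lemma dmin_sym A B a b : A a -> B b -> dmin A B = dmin B A.
Proof.
  intros Ha Hb; apply (is_dmin_unique A B);
    [|apply is_dmin_sym]; eapply dmin_spec; eauto.
Qed.

Lemma dmin_refl A a : A a -> dmin A A = 0.
Proof.
  intros Ha; pose proof (dmin_le A A a a Ha Ha) as Hle; rewrite d_refl in Hle.
  destruct (dmin_spec A A a a Ha Ha) as [[x [y [_ [_ Hxy]]]] _].
  pose proof (d_ge0 x y); lra.
Qed.

Lemma dmin_in_D A B a b : A a -> B b -> In (dmin A B) D.
Proof.
  intros Ha Hb; destruct (dmin_spec A B a b Ha Hb) as [[x [y [_ [_ <-]]]] _].
  apply HinD.
Qed.

Section Gap.

Variable r : R.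
Hypothesis Hr : 0 < r.
Hypothesis HrD : In r D.
Hypothesis Hgap : forall t, In t D -> ~ (r < t /\ t <= 2 * r).

Lemma close_trans x y z : d x y <= r -> d y z <= r -> d x z <= r.
Proof.
  intros Hxy Hyz; apply Rnot_lt_le; intro Hxz.
  apply (Hgap _ (HinD x z)); pose proof (d_triangle x y z); lra.
Qed.

Lemma sim_class_inhabited A : sim_class d r A -> exists x, A x.
Proof. intros [c Hc]; exists c; apply Hc; rewrite d_refl; lra. Qed.

Lemma sim_class_close A y z : sim_class d r A -> A y -> A z -> d y z <= r.
Proof.
  intros [c Hc] Hy%Hc Hz%Hc; apply (close_trans y c z); [rewrite d_sym|]; easy.
Qed.

Lemma sim_class_closed A y z : sim_class d r A -> A y -> d y z <= r -> A z.
Proof. intros [c Hc] Hy%Hc Hyz; apply Hc, (close_trans c y z); easy. Qed.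

Lemma sim_class_far A B a b :
  sim_class d r A -> sim_class d r B -> ~ (forall x, A x <-> B x) ->
  A a -> B b -> r < d a b.
Proof.
  intros HA HB Hne Ha Hb; apply Rnot_le_lt; intro Hab; apply Hne; intro w; split.
  - intros Hw; apply (sim_class_closed B b w HB Hb).
    rewrite d_sym in Hab; apply (close_trans b a w Hab), (sim_class_close A); easy.
  - intros Hw; apply (sim_class_closed A a w HA Ha).
    apply (close_trans a b w Hab), (sim_class_close B); easy.
Qed.

Lemma r_lt_dmin A B :
  sim_class d r A -> sim_class d r B -> ~ (forall x, A x <-> B x) -> r < dmin A B.
Proof.
  intros HA HB Hne.
  destruct (sim_class_inhabited A HA) as [a Ha], (sim_class_inhabited B HB) as [b Hb].
  destruct (dmin_spec A B a b Ha Hb) as [[x [y [Hx [Hy <-]]]] _].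
  now apply (sim_class_far A B).
Qed.

(* Realise d_min(A,B) from a via a point at distance r from a point b0 of a
   minimising pair (a0, b0); it lies in B since B is closed under ~r. *)
Lemma dmin_attained_from A B a :
  sim_class d r A -> sim_class d r B -> ~ (forall x, A x <-> B x) -> A a ->
  exists b, B b /\ d a b = dmin A B.
Proof.
  intros HA HB Hne Ha.
  destruct (sim_class_inhabited B HB) as [b Hb].
  destruct (dmin_spec A B a b Ha Hb) as [[a0 [b0 [Ha0 [Hb0 Hab0]]]] _].
  pose proof (r_lt_dmin A B HA HB Hne) as Hrm.
  pose proof (dmin_le A B a b0 Ha Hb0) as Hm.
  pose proof (sim_class_close A a a0 HA Ha Ha0) as Haa0.
  pose proof (d_triangle a a0 b0) as Htri.
  set (x l := if Nat.eqb l 0 then a else b0).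
  set (t l := if Nat.eqb l 0 then dmin A B else r).
  destruct (one_point_extension 2 x t) as [p Hp].
  - intros [|[|u]] [|[|v]] Hu Hv; cbn; intros E; try lia;
      subst; rewrite d_refl in Hm; lra.
  - intros [|[|u]] Hu; cbn; try lia; split; try lra.
    + eapply dmin_in_D; eauto.
    + easy.
  - intros [|[|u]] [|[|v]] Hu Hv; cbn; try lia;
      rewrite ?d_refl, ?(d_sym b0 a); split; lra.
  - pose proof (Hp 0%nat ltac:(lia)) as Hpa; pose proof (Hp 1%nat ltac:(lia)) as Hpb0.
    cbn in Hpa, Hpb0; exists p; split.
    + apply (sim_class_closed B b0 p HB Hb0); rewrite d_sym; lra.
    + now rewrite d_sym.
Qed.

Lemma dist_le_dmin_add_r A B a c :
  sim_class d r A -> sim_class d r B -> ~ (forall x, A x <-> B x) ->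
  A a -> B c -> d a c <= dmin A B + r.
Proof.
  intros HA HB Hne Ha Hc.
  destruct (dmin_attained_from A B a HA HB Hne Ha) as [b [Hb <-]].
  pose proof (sim_class_close B b c HB Hb Hc); pose proof (d_triangle a b c); lra.
Qed.

Lemma dmin_triangle A B C c :
  sim_class d r A -> sim_class d r B -> ~ (forall x, B x <-> A x) -> C c ->
  dmin A C <= dmin A B + dmin B C.
Proof.
  intros HA HB Hne Hc.
  destruct (sim_class_inhabited B HB) as [b Hb].
  destruct (dmin_spec B C b c Hb Hc) as [[b' [c' [Hb' [Hc' <-]]]] _].
  destruct (dmin_attained_from B A b' HB HA Hne Hb') as [a [Ha Hba]].
  rewrite (dmin_sym B A b' a Hb' Ha) in Hba; rewrite <- Hba, d_sym.
  pose proof (dmin_le A C a c' Ha Hc'); pose proof (d_triangle a b' c'); lra.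
Qed.

Section Classes.

Variables (n : nat) (A : nat -> M -> Prop).
Hypothesis HA : forall i, (i < n)%nat -> sim_class d r (A i).
Hypothesis Hdist : forall i j, (i < n)%nat -> (j < n)%nat -> i <> j ->
  ~ (forall x, A i x <-> A j x).

Definition realises_dmin (k : nat) (a : nat -> M) : Prop :=
  (forall i, (i < k)%nat -> A i (a i)) /\
  (forall i j, (i < k)%nat -> (j < k)%nat -> d (a i) (a j) = dmin (A i) (A j)).

Lemma realises_dmin_extend k a :
  (k < n)%nat -> realises_dmin k a ->
  exists p, A k p /\ forall i, (i < k)%nat -> d (a i) p = dmin (A i) (A k).
Proof.
  intros Hk [Ha Had].
  set (dm i j := dmin (A i) (A j)).
  assert (HAk : forall l, (l <= k)%nat -> sim_class d r (A l))
    by (intros l Hl; apply HA; lia).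
  assert (Hdk : forall u v, (u <= k)%nat -> (v <= k)%nat -> u <> v ->
                  ~ (forall x, A u x <-> A v x))
    by (intros u v Hu Hv; apply Hdist; lia).
  assert (Hinh : forall l, (l <= k)%nat -> exists y, A l y)
    by (intros l Hl; apply sim_class_inhabited, HAk, Hl).
  destruct (Hinh k (le_n k)) as [c Hc].
  assert (Hsym : forall i j, (i <= k)%nat -> (j <= k)%nat -> dm i j = dm j i).
  { intros i j Hi Hj; destruct (Hinh i Hi), (Hinh j Hj); eapply dmin_sym; eauto. }
  assert (Htri : forall i j l, (i <= k)%nat -> (j <= k)%nat -> (l <= k)%nat -> i <> j ->
                   dm i l <= dm i j + dm j l).
  { intros i j l Hi Hj Hl Hij; destruct (Hinh l Hl) as [y Hy].
    apply (dmin_triangle _ _ _ y); [apply HAk; lia..|apply Hdk; lia|exact Hy]. }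
  assert (Hfar : forall l, (l < k)%nat -> r < dm l k)
    by (intros l Hl; apply r_lt_dmin; [apply HAk..|apply Hdk]; lia).
  assert (Hc_near : forall l, (l < k)%nat ->
                      dm l k <= d (a l) c /\ d (a l) c <= dm l k + r).
  { intros l Hl; split; [apply dmin_le; [apply Ha|]; easy|].
    apply dist_le_dmin_add_r; [apply HAk; lia..|apply Hdk; lia|apply Ha, Hl|exact Hc]. }
  set (x l := if Nat.eqb l k then c else a l).
  set (t l := if Nat.eqb l k then r else dm l k).
  assert (Hx : forall l, (l <= k)%nat -> A l (x l)).
  { intros l Hl; unfold x; destruct (Nat.eqb_spec l k); [now subst|apply Ha; lia]. }
  destruct (one_point_extension (S k) x t) as [p Hp].
  - intros u v Hu Hv E; destruct (Nat.eq_dec u v) as [|Huv]; [easy|exfalso].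
    pose proof (sim_class_far (A u) (A v) (x u) (x v) (HAk u ltac:(lia))
                  (HAk v ltac:(lia)) (Hdk u v ltac:(lia) ltac:(lia) Huv)
                  (Hx u ltac:(lia)) (Hx v ltac:(lia))) as Hr_uv.
    rewrite E, d_refl in Hr_uv; lra.
  - intros l Hl; unfold t; destruct (Nat.eqb_spec l k); [easy|].
    specialize (Hfar l ltac:(lia)); split; [|lra].
    apply (dmin_in_D _ _ (a l) c); [apply Ha; lia|easy].
  - intros u v Hu Hv; unfold x, t.
    destruct (Nat.eqb_spec u k), (Nat.eqb_spec v k).
    + rewrite d_refl; lra.
    + destruct (Hc_near v ltac:(lia)); specialize (Hfar v ltac:(lia)).
      rewrite d_sym; lra.
    + destruct (Hc_near u ltac:(lia)); specialize (Hfar u ltac:(lia)); lra.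
    + destruct (Nat.eq_dec u v) as [<-|Huv].
      { rewrite d_refl; specialize (Hfar u ltac:(lia)); split; lra. }
      rewrite Had by lia; fold (dm u v).
      pose proof (Htri u v k ltac:(lia) ltac:(lia) ltac:(lia) Huv).
      pose proof (Htri v u k ltac:(lia) ltac:(lia) ltac:(lia) ltac:(lia)).
      pose proof (Htri u k v ltac:(lia) ltac:(lia) ltac:(lia) ltac:(lia)).
      rewrite (Hsym v u), (Hsym k v) in * by lia; split; lra.
  - exists p; split.
    + pose proof (Hp k ltac:(lia)) as Hpc; unfold x, t in Hpc.
      rewrite Nat.eqb_refl in Hpc.
      apply (sim_class_closed (A k) c p (HAk k (le_n k)) Hc); rewrite d_sym; lra.
    + intros i Hi; pose proof (Hp i ltac:(lia)) as Hpi; unfold x, t in Hpi.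
      destruct (Nat.eqb_spec i k); [lia|]; now rewrite d_sym.
Qed.

Lemma realises_dmin_upto k : (k <= n)%nat -> exists a, realises_dmin k a.
Proof.
  induction k as [|k IH]; intros Hk.
  - destruct universal_inhabited as [c].
    exists (fun _ => c); split; intros; lia.
  - destruct (IH ltac:(lia)) as [a Hreal].
    destruct (realises_dmin_extend k a ltac:(lia) Hreal) as [p [Hp Hpd]].
    destruct Hreal as [Ha Had].
    exists (fun l => if Nat.eqb l k then p else a l); split.
    + intros i Hi; destruct (Nat.eqb_spec i k); [now subst|apply Ha; lia].
    + intros i j Hi Hj; destruct (Nat.eqb_spec i k), (Nat.eqb_spec j k); subst.
      * rewrite d_refl; symmetry; now apply (dmin_refl _ p).
      * rewrite d_sym, Hpd by lia.
        apply (dmin_sym _ _ (a j) p); [apply Ha; lia|easy].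
      * now apply Hpd; lia.
      * apply Had; lia.
Qed.

End Classes.
End Gap.
End UniversalHomogeneous.

Theorem lemma3p4 (D : list R) (HD : dist_set_ok D) (Huniv : universal_D D)
  (M : Type) (d : M -> M -> R) (HM : in_UD D M d)
  (r : R) (HrD : In r D) (Hr : 0 < r)
  (Hgap : forall t, In t D -> ~ (r < t /\ t <= 2 * r))
  (n : nat) (A : nat -> M -> Prop)
  (HA : forall i, (i < n)%nat -> sim_class d r (A i))
  (Hdist : forall i j, (i < n)%nat -> (j < n)%nat -> i <> j ->
             ~ (forall x, A i x <-> A j x)) :
  exists a : nat -> M,
    (forall i, (i < n)%nat -> A i (a i)) /\
    (forall i j, (i < n)%nat -> (j < n)%nat -> is_dmin d (A i) (A j) (d (a i) (a j))).
Proof.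
  destruct HM as [Hd [_ [Hhom [[HinD _] Hun]]]].
  destruct (realises_dmin_upto M d D Hd HinD (proj1 HD) Hhom Hun r Hr HrD Hgap n A HA Hdist n
              (le_n n)) as [a [Ha Had]].
  exists a; split; [easy|].
  intros i j Hi Hj; rewrite Had by easy.
  now apply (dmin_spec M d D HinD _ _ (a i) (a j)); apply Ha.
Qed.
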